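(* Let $p$ be one of $(123,\{0\},\{1\})$, $(123,\{0\},\{3\})$, $(132,\{0\},\{1\})$, $(132,\{0\},\{3\})$, $(132,\{1\},\{3\})$, $(132,\{2\},\{3\})$, $(132,\{3\},\{3\})$, or any pattern in the same symmetry class as one of these. Then for all $n\ge1$, \[a_n(p)=(n-1)!\Big(1+\sum_{k=1}^{n-1}\frac1k\Big).\]
   Context: For $n\ge1$, $\mathcal S_n$ is the set of permutations $\pi=\pi_1\cdots\pi_n$ of $[n]$. A bi-vincular pattern of length $k$ is a triple $p=(\sigma,X,Y)$ with $\sigma\in\mathcal S_k$ and $X,Y\subseteq\{0,1,\dots,k\}$. A permutation $\pi\in\mathcal S_n$ contains $p$ if there are indices $1\le i_1<\dots<i_k\le n$ such that $(\pi_{i_1},\dots,\pi_{i_k})$ is order-isomorphic to $\sigma$ and, letting $j_1<\dots<j_k$ be the values $\pi_{i_1},\dots,\pi_{i_k}$ sorted increasingly and setting $i_0=j_0=0$, $i_{k+1}=j_{k+1}=n+1$, one has $i_{x+1}=i_x+1$ for all $x\in X$ and $j_{y+1}=j_y+1$ for all $y\in Y$. Otherwise $\pi$ avoids $p$; $a_n(p)$ is the number of $\pi\in\mathcal S_n$ avoiding $p$. Symmetries: $p^{i}=(\sigma^{-1},Y,X)$, $p^{r}=(\sigma^{r},\{k-x:x\in X\},Y)$, $p^{c}=(\sigma^{c},X,\{k-y:y\in Y\})$ with $\sigma^r_j=\sigma_{k+1-j}$, $\sigma^c_j=k+1-\sigma_j$; the symmetry class of $p$ consists of all patterns obtained from $p$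 by finitely many applications of these maps. *)

From HB Require Import structures.
From mathcomp Require Import all_boot all_order all_algebra all_fingroup.
Set Implicit Arguments. Unset Strict Implicit. Unset Printing Implicit Defensive.

(* A bi-vincular pattern of length k: (sigma, X, Y) with sigma in S_k
   (0-based: 'I_k), and X, Y subsets of {0,...,k} (= 'I_k.+1). *)
Definition bvpat (k : nat) : Type :=
  ({perm 'I_k} * {set 'I_k.+1} * {set 'I_k.+1})%type.

Definition bv_sigma k (p : bvpat k) : {perm 'I_k} := p.1.1.
Definition bv_X k (p : bvpat k) : {set 'I_k.+1} := p.1.2.
Definition bv_Y k (p : bvpat k) : {set 'I_k.+1} := p.2.

(* The 1-based positions i_1<..<i_k are (f a).+1,
   extended by i_0 = 0, i_{k+1} = n+1; similarly the 1-based values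
   pi_{i_a} = (pi (f a)).+1 sorted increasingly, extended by j_0 = 0,
   j_{k+1} = n+1. *)
Definition pos_ext k n (f : {ffun 'I_k -> 'I_n}) : seq nat :=
  0 :: [seq (f a).+1 | a <- enum 'I_k] ++ [:: n.+1].

Definition val_ext k n (pi : {perm 'I_n}) (f : {ffun 'I_k -> 'I_n}) : seq nat :=
  0 :: sort leq [seq (pi (f a)).+1 | a <- enum 'I_k] ++ [:: n.+1].

Definition occurrence k n (pi : {perm 'I_n}) (p : bvpat k)
    (f : {ffun 'I_k -> 'I_n}) : bool :=
  [&& [forall a : 'I_k, forall b : 'I_k, (a < b) ==> (f a < f b)],
      [forall a : 'I_k, forall b : 'I_k,
          (pi (f a) < pi (f b)) == (bv_sigma p a < bv_sigma p b)],
      [forall x in bv_X p,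
          nth 0 (pos_ext f) x.+1 == (nth 0 (pos_ext f) x).+1] &
      [forall y in bv_Y p,
          nth 0 (val_ext pi f) y.+1 == (nth 0 (val_ext pi f) y).+1]].

Definition contains k n (pi : {perm 'I_n}) (p : bvpat k) : bool :=
  [exists f : {ffun 'I_k -> 'I_n}, occurrence pi p f].

Definition avoiders_count k (p : bvpat k) (n : nat) : nat :=
  #|[set pi : {perm 'I_n} | ~~ contains pi p]|.

Definition rev_perm k : {perm 'I_k} := perm (@rev_ord_inj k).

(* (s * t) x = t (s x) in mathcomp *)
Definition sym_i k (p : bvpat k) : bvpat k :=
  ((bv_sigma p)^-1%g, bv_Y p, bv_X p).
(* sigma^r_j = sigma_{k+1-j};  X -> {k - x} *)
Definition sym_r k (p : bvpat k) : bvpat k :=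
  ((rev_perm k * bv_sigma p)%g, [set rev_ord x | x in bv_X p], bv_Y p).
(* sigma^c_j = k+1-sigma_j;  Y -> {k - y} *)
Definition sym_c k (p : bvpat k) : bvpat k :=
  ((bv_sigma p * rev_perm k)%g, bv_X p, [set rev_ord y | y in bv_Y p]).

Inductive in_sym_class k (p : bvpat k) : bvpat k -> Prop :=
  | isc_refl : in_sym_class p p
  | isc_i q : in_sym_class p q -> in_sym_class p (sym_i q)
  | isc_r q : in_sym_class p q -> in_sym_class p (sym_r q)
  | isc_c q : in_sym_class p q -> in_sym_class p (sym_c q).

Definition perm123 : {perm 'I_3} := 1%g.
Definition perm132 : {perm 'I_3} := tperm (inord 1) (inord 2).

Definition s3 (x : nat) : {set 'I_4} := [set (inord x : 'I_4)].

Definition base_patterns : seq (bvpat 3) :=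
  [:: (perm123, s3 0, s3 1); (perm123, s3 0, s3 3);
      (perm132, s3 0, s3 1); (perm132, s3 0, s3 3);
      (perm132, s3 1, s3 3); (perm132, s3 2, s3 3);
      (perm132, s3 3, s3 3)].

From HB Require Import structures.
From mathcomp Require Import all_boot all_order all_algebra all_fingroup.
From mathcomp Require Import zify.
Import GRing.Theory.
Set Implicit Arguments. Unset Strict Implicit. Unset Printing Implicit Defensive.

(* Each symmetry i, r, c maps occurrences in pi to occurrences in pi^-1, in pi
   read backwards, or in pi complemented, so a_n is constant on symmetry classes
   and it suffices to treat the seven base patterns.  For a base pattern, sort the
   permutations of [0..n] by an anchor: the first value c for the patterns with
   X = {0}, the position q of the maximum n for the others.  At the extreme anchor
   the pattern cannot occur, giving n! avoiders.  Otherwise the pattern occurs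
   exactly when one specific element w is not extremal (first, last, smallest or
   largest) on a set S of size m determined by the anchor; composing with the
   transpositions of S shows all elements of S are equally often extremal, so
   there are n!/m avoiders.  As the anchor varies, m runs through 1, 2, ..., n,
   whence a_(n+1) = n! (1 + 1/1 + ... + 1/n). *)

(** * Occurrences of patterns of length three *)

Definition o0 : 'I_3 := @Ordinal 3 0 isT.
Definition o1 : 'I_3 := @Ordinal 3 1 isT.
Definition o2 : 'I_3 := @Ordinal 3 2 isT.

Lemma enum_ord3 : enum 'I_3 = [:: o0; o1; o2].
Proof. by apply: (inj_map val_inj); rewrite val_enum_ord. Qed.

Lemma ord3P (b : 'I_3) : [\/ b = o0, b = o1 | b = o2].
Proof.
by case: b => [[|[|[|]]] ?] //; [constructor 1|constructor 2|constructor 3]; apply: val_inj.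
Qed.

Lemma rev_ord3 : [/\ rev_ord o0 = o2, rev_ord o1 = o1 & rev_ord o2 = o0].
Proof. by split; apply: val_inj. Qed.

Definition increasing3 n (f : 'I_3 -> 'I_n) :=
  [forall a : 'I_3, forall b : 'I_3, (a < b) ==> (f a < f b)].

Definition order_iso3 n (pi : {perm 'I_n}) (s : {perm 'I_3}) (f : 'I_3 -> 'I_n) :=
  [forall a : 'I_3, forall b : 'I_3, (pi (f a) < pi (f b)) == (s a < s b)].

Definition positions3 n (f : 'I_3 -> 'I_n) : seq nat :=
  [:: 0; (f o0).+1; (f o1).+1; (f o2).+1; n.+1].

(* Once [f] is order-isomorphic to [s], the sorted values are read off in the order [s^-1]. *)
Definition values3 n (pi : {perm 'I_n}) (s : {perm 'I_3}) (f : 'I_3 -> 'I_n) : seq nat :=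
  [:: 0; (pi (f (s^-1 o0)%g)).+1; (pi (f (s^-1 o1)%g)).+1;
         (pi (f (s^-1 o2)%g)).+1; n.+1].

Lemma increasing3P n (f : 'I_3 -> 'I_n) :
  increasing3 f -> forall a b, (f a < f b) = (a < b).
Proof.
move=> /forallP incr a b.
have lt_f (c d : 'I_3) : c < d -> f c < f d by move=> cd; have /forallP/(_ d) := incr c; rewrite cd.
case: (ltngtP a b) => [/lt_f //|/lt_f ba|/val_inj -> ]; last by rewrite !ltnn.
by apply/negbTE; rewrite -leqNgt ltnW.
Qed.

Lemma val_ext_order_iso3 n (pi : {perm 'I_n}) (s : {perm 'I_3}) (f : {ffun 'I_3 -> 'I_n}) :
  order_iso3 pi s f -> val_ext pi f = values3 pi s f.
Proof.
move=> /forallP iso; rewrite /val_ext /values3.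
have isoP a b : (pi (f a) < pi (f b)) = (s a < s b) by have /forallP/(_ b)/eqP := iso a.
suff -> : sort leq [seq (pi (f a)).+1 | a <- enum 'I_3] =
   [seq (pi (f a)).+1 | a <- [seq (s^-1)%g b | b <- enum 'I_3]] by rewrite enum_ord3.
apply: (sorted_eq leq_trans anti_leq); first exact: (sort_sorted leq_total).
  by rewrite enum_ord3 /= !ltnS !andbT; apply/andP; split; apply: ltnW; rewrite isoP !permKV.
rewrite perm_sort; apply: perm_map; apply: uniq_perm; first exact: enum_uniq.
  by rewrite map_inj_uniq ?enum_uniq //; exact: perm_inj.
move=> x; rewrite mem_enum; apply/esym/mapP; exists (s x); first by rewrite mem_enum.
by rewrite permK.
Qed.

Lemma occurrence3E n (pi : {perm 'I_n}) (p : bvpat 3) (f : {ffun 'I_3 -> 'I_n}) :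
  occurrence pi p f = [&& increasing3 f, order_iso3 pi (bv_sigma p) f,
     [forall x in bv_X p, nth 0 (positions3 f) x.+1 == (nth 0 (positions3 f) x).+1] &
     [forall y in bv_Y p, nth 0 (values3 pi (bv_sigma p) f) y.+1
                            == (nth 0 (values3 pi (bv_sigma p) f) y).+1]].
Proof.
have posE : pos_ext f = positions3 f by rewrite /pos_ext enum_ord3.
rewrite /occurrence posE.
have [iso|] := boolP (order_iso3 pi (bv_sigma p) f); last first.
  by rewrite /order_iso3 => /negbTE ->; rewrite !andbF.
by rewrite (val_ext_order_iso3 iso); move: iso; rewrite /order_iso3 => ->.
Qed.

Definition triple n (i0 i1 i2 : 'I_n) : {ffun 'I_3 -> 'I_n} :=
  [ffun b : 'I_3 => nth i0 [:: i0; i1; i2] b].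

Lemma tripleE n (i0 i1 i2 : 'I_n) :
  [/\ triple i0 i1 i2 o0 = i0, triple i0 i1 i2 o1 = i1 & triple i0 i1 i2 o2 = i2].
Proof. by rewrite !ffunE. Qed.

Lemma contains3P n (pi : {perm 'I_n}) (p : bvpat 3) :
  reflect (exists i0 i1 i2, occurrence pi p (triple i0 i1 i2)) (contains pi p).
Proof.
apply: (iffP existsP) => [[f occ]|[i0 [i1 [i2 occ]]]]; last by exists (triple i0 i1 i2).
exists (f o0), (f o1), (f o2).
suff -> : triple (f o0) (f o1) (f o2) = f by [].
by apply/ffunP => b; have [t0 t1 t2] := tripleE (f o0) (f o1) (f o2); case: (ord3P b) => ->.
Qed.

Lemma increasing3_triple n (i0 i1 i2 : 'I_n) : increasing3 (triple i0 i1 i2) = (i0 < i1 < i2).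
Proof.
have [t0 t1 t2] := tripleE i0 i1 i2.
apply/idP/andP => [/forallP incr|[lt01 lt12]].
  by have /forallP/(_ o1) := incr o0; have /forallP/(_ o2) := incr o1; rewrite t0 t1 t2 /= => -> ->.
apply/forallP => a; apply/forallP => b; apply/implyP.
case: (ord3P a) => ->; case: (ord3P b) => -> //= _;
  by rewrite ?t0 ?t1 ?t2 ?lt01 ?lt12 ?(ltn_trans lt01 lt12).
Qed.

Lemma order_iso3_perm1 n (pi : {perm 'I_n}) (g : 'I_3 -> 'I_n) :
  order_iso3 pi 1%g g = (pi (g o0) < pi (g o1) < pi (g o2)).
Proof.
apply/idP/andP => [/forallP iso|[lt01 lt12]].
  have /forallP/(_ o1)/eqP := iso o0; have /forallP/(_ o2)/eqP := iso o1.
  by rewrite !perm1 => -> ->.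
have lt02 := ltn_trans lt01 lt12.
apply/forallP => a; apply/forallP => b; rewrite !perm1.
case: (ord3P a) => ->; case: (ord3P b) => -> /=; apply/eqP;
  rewrite ?ltnn ?lt01 ?lt12 ?lt02 //; apply/negbTE; rewrite -leqNgt ltnW //.
Qed.

Lemma order_iso3_tperm12 n (pi : {perm 'I_n}) (g : 'I_3 -> 'I_n) :
  order_iso3 pi (tperm o1 o2) g = (pi (g o0) < pi (g o2) < pi (g o1)).
Proof.
have e0 : tperm o1 o2 o0 = o0 by rewrite tpermD.
have e1 : tperm o1 o2 o1 = o2 by rewrite tpermL.
have e2 : tperm o1 o2 o2 = o1 by rewrite tpermR.
apply/idP/andP => [/forallP iso|[lt02 lt21]].
  have /forallP/(_ o2)/eqP := iso o0; have /forallP/(_ o1)/eqP := iso o2.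
  by rewrite e0 e1 e2 => -> ->.
have lt01 := ltn_trans lt02 lt21.
apply/forallP => a; apply/forallP => b.
case: (ord3P a) => ->; case: (ord3P b) => -> /=; rewrite ?e0 ?e1 ?e2 /=; apply/eqP;
  rewrite ?ltnn ?lt02 ?lt21 ?lt01 //; apply/negbTE; rewrite -leqNgt ltnW //.
Qed.

(** * Symmetries *)

Lemma rev_permE k x : rev_perm k x = rev_ord x.
Proof. by rewrite /rev_perm permE. Qed.

Lemma rev_permV k : ((rev_perm k)^-1 = rev_perm k)%g.
Proof.
apply/permP => x; apply: (@perm_inj _ (rev_perm k)).
by rewrite permKV !rev_permE rev_ordK.
Qed.

Lemma mul_rev_perm k : (rev_perm k * rev_perm k = 1)%g.
Proof. by rewrite -{1}rev_permV mulVg. Qed.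

Lemma ltn_rev_ord n (x y : 'I_n) : (rev_ord x < rev_ord y) = (y < x).
Proof. by have := ltn_ord x; have := ltn_ord y; rewrite /= => ? ?; apply/idP/idP; lia. Qed.

Lemma imset_rev_ordK k (X : {set 'I_k}) : [set rev_ord x | x in [set rev_ord x | x in X]] = X.
Proof. by rewrite -imset_comp (eq_imset _ (@rev_ordK _)) imset_id. Qed.

Lemma occurrence_sym_r n (pi : {perm 'I_n}) (p : bvpat 3) (f : {ffun 'I_3 -> 'I_n}) :
  occurrence pi p f ->
  occurrence (rev_perm n * pi)%g (sym_r p) [ffun a => rev_ord (f (rev_ord a))].
Proof.
rewrite !occurrence3E => /and4P [incr iso hX hY]; have [r0 r1 r2] := rev_ord3.
apply/and4P; split.
- apply/forallP => a; apply/forallP => b; apply/implyP => ab.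
  by rewrite !ffunE ltn_rev_ord (increasing3P incr) ltn_rev_ord.
- apply/forallP => a; apply/forallP => b; rewrite /= !ffunE !permM !rev_permE !rev_ordK.
  by have /forallP/(_ (rev_ord b)) := forallP iso (rev_ord a).
- apply/forallP => y; apply/implyP => /imsetP [x xX ->].
  have := forallP hX x; rewrite xX /= /positions3 !ffunE r0 r1 r2.
  have := ltn_ord (f o0); have := ltn_ord (f o1); have := ltn_ord (f o2).
  by case: x xX => [[|[|[|[|]]]] ?] //= _; lia.
- by rewrite /values3 /= !invMg !permM rev_permV !rev_permE !ffunE !rev_ordK.
Qed.

Lemma occurrence_sym_c n (pi : {perm 'I_n}) (p : bvpat 3) (f : {ffun 'I_3 -> 'I_n}) :
  occurrence pi p f -> occurrence (pi * rev_perm n)%g (sym_c p) f.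
Proof.
rewrite !occurrence3E => /and4P [incr iso hX hY]; have [r0 r1 r2] := rev_ord3.
apply/and4P; split => //.
- apply/forallP => a; apply/forallP => b; rewrite /= !permM !rev_permE !ltn_rev_ord.
  by have /forallP/(_ a) := forallP iso b.
- apply/forallP => y; apply/implyP => /imsetP [x xX ->].
  have := forallP hY x; rewrite xX /= /values3 /= !invMg !permM rev_permV !rev_permE r0 r1 r2.
  set u0 := pi (f _); set u1 := pi (f _); set u2 := pi (f _).
  have := ltn_ord u0; have := ltn_ord u1; have := ltn_ord u2.
  by case: x xX => [[|[|[|[|]]]] ?] //= _; lia.
Qed.

Lemma occurrence_sym_i n (pi : {perm 'I_n}) (p : bvpat 3) (f : {ffun 'I_3 -> 'I_n}) :
  occurrence pi p f ->
  occurrence (pi^-1)%g (sym_i p) [ffun b => pi (f ((bv_sigma p)^-1 b)%g)].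
Proof.
rewrite !occurrence3E => /and4P [incr iso hX hY].
have isoP a b : (pi (f a) < pi (f b)) = (bv_sigma p a < bv_sigma p b).
  by have /forallP/(_ b)/eqP := forallP iso a.
apply/and4P; split.
- apply/forallP => a; apply/forallP => b; apply/implyP => ab.
  by rewrite !ffunE isoP !permKV.
- by apply/forallP => a; apply/forallP => b; rewrite /= !ffunE !permK (increasing3P incr).
- by rewrite /positions3 !ffunE.
- by rewrite /values3 /= invgK !ffunE !permK.
Qed.

Lemma avoiders_count_invariant k n (S : bvpat k -> bvpat k) (T : {perm 'I_n} -> {perm 'I_n}) :
  involutive S -> involutive T ->
  (forall pi p, contains pi p -> contains (T pi) (S p)) ->
  forall p, avoiders_count (S p) n = avoiders_count p n.
Proof.
move=> SK TK ST p; rewrite /avoiders_count.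
rewrite -(card_preimset [set x | ~~ contains x p] (inv_inj TK)).
apply: eq_card => x; rewrite !inE; congr negb.
by apply/idP/idP => [/ST|/ST]; rewrite ?SK ?TK.
Qed.

Lemma avoiders_count_sym_r n (p : bvpat 3) : avoiders_count (sym_r p) n = avoiders_count p n.
Proof.
apply: (@avoiders_count_invariant 3 n _ (fun x => rev_perm n * x)%g).
- by case=> [[s X] Y]; rewrite /sym_r /= mulgA mul_rev_perm mul1g imset_rev_ordK.
- by move=> x; rewrite mulgA mul_rev_perm mul1g.
- by move=> pi q /existsP [f occ]; apply/existsP; eexists; apply: occurrence_sym_r occ.
Qed.

Lemma avoiders_count_sym_c n (p : bvpat 3) : avoiders_count (sym_c p) n = avoiders_count p n.
Proof.
apply: (@avoiders_count_invariant 3 n _ (fun x => x * rev_perm n)%g).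
- by case=> [[s X] Y]; rewrite /sym_c /= -mulgA mul_rev_perm mulg1 imset_rev_ordK.
- by move=> x; rewrite -mulgA mul_rev_perm mulg1.
- by move=> pi q /existsP [f occ]; apply/existsP; eexists; apply: occurrence_sym_c occ.
Qed.

Lemma avoiders_count_sym_i n (p : bvpat 3) : avoiders_count (sym_i p) n = avoiders_count p n.
Proof.
apply: (@avoiders_count_invariant 3 n _ (fun x => x^-1)%g).
- by case=> [[s X] Y]; rewrite /sym_i /= invgK.
- exact: invgK.
- by move=> pi q /existsP [f occ]; apply/existsP; eexists; apply: occurrence_sym_i occ.
Qed.

Lemma avoiders_count_class (p0 p : bvpat 3) n :
  in_sym_class p0 p -> avoiders_count p n = avoiders_count p0 n.
Proof.
by elim=> // q _ IH; rewrite ?avoiders_count_sym_r ?avoiders_count_sym_c ?avoiders_count_sym_i.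
Qed.

(** * Counting permutations by an anchor *)

Lemma card_uniform_partition (T I : finType) (A : {set T}) (S : {set I})
    (F : I -> {set T}) (w : I) :
  (forall x, x \in A -> #|[set s in S | x \in F s]| = 1) ->
  (forall s, s \in S -> F s \subset A) ->
  (forall s s', s \in S -> s' \in S -> #|F s| <= #|F s'|) ->
  w \in S -> #|A| = #|S| * #|F w|.
Proof.
move=> F_part F_sub F_le wS.
have -> : #|A| = \sum_(x in A) \sum_(s in S) (x \in F s).
  rewrite -sum1_card; apply: eq_bigr => x xA.
  by rewrite -(F_part x xA) -sum1dep_card big_mkcondr; apply: eq_bigr => s _; case: (x \in F s).
rewrite exchange_big /= -sum_nat_const; apply: eq_bigr => s sS.
have -> : #|F w| = #|[set x | (x \in A) && (x \in F s)]|.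
  rewrite (@anti_leq #|F w| #|F s|) ?F_le //; apply: eq_card => x; rewrite inE.
  by case: (boolP (x \in F s)) => xF; rewrite ?andbT ?andbF ?(subsetP (F_sub s sS)).
by rewrite -sum1dep_card big_mkcondr; apply: eq_bigr => x _; case: (x \in F s).
Qed.

Lemma card_perm_anchor n (q b : 'I_n.+1) : #|[set pi : {perm 'I_n.+1} | pi q == b]| = n`!.
Proof.
have := @card_uniform_partition _ _ [set: {perm 'I_n.+1}] [set: 'I_n.+1]
  (fun s => [set pi : {perm 'I_n.+1} | pi q == s]) b.
rewrite !cardsT card_Sn card_ord factS => partition_eq.
apply/eqP; rewrite -(eqn_pmul2l (ltn0Sn n)); apply/eqP/esym/partition_eq => //.
- move=> pi _; rewrite -(cards1 (pi q)); apply: eq_card => s; rewrite !inE.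
  by rewrite eq_sym.
- move=> s s' _ _; rewrite -(card_imset _ (mulIg (tperm s s'))); apply: subset_leq_card.
  by apply/subsetP => _ /imsetP [pi + ->]; rewrite !inE permM => /eqP ->; rewrite tpermL.
Qed.

Lemma card_anchor_all n (P : pred {perm 'I_n.+1}) (q b : 'I_n.+1) :
  (forall pi : {perm 'I_n.+1}, pi q = b -> P pi) ->
  #|[set pi | P pi && (pi q == b)]| = n`!.
Proof.
move=> HP; rewrite -(card_perm_anchor q b); apply: eq_card => pi; rewrite !inE.
by case: eqP => [/HP ->|]; rewrite ?andbF.
Qed.

(* Composing with a transposition of [S] (which fixes the anchor [q]) moves the
   maximiser of [g \o pi] on [S] freely, so all |S| maximisers are equally likely. *)
Lemma card_anchor_argmax n (P : pred {perm 'I_n.+1}) (q b w : 'I_n.+1)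
    (S : {set 'I_n.+1}) (g : nat -> nat) :
  w \in S -> q \notin S -> {in gtn n.+1 &, injective g} ->
  (forall pi : {perm 'I_n.+1}, pi q = b -> P pi = [forall j in S, g (pi j) <= g (pi w)]) ->
  #|[set pi | P pi && (pi q == b)]| * #|S| = n`!.
Proof.
move=> wS qS g_inj HP.
pose F s := [set pi : {perm 'I_n.+1} | (pi q == b) && [forall j in S, g (pi j) <= g (pi s)]].
have -> : [set pi | P pi && (pi q == b)] = F w.
  by apply/setP => pi; rewrite !inE; case: eqP => [/HP ->|]; rewrite ?andbF ?andbT.
rewrite mulnC -(card_perm_anchor q b); apply/esym/(card_uniform_partition (F := F)) => //.
- move=> pi; rewrite inE => pi_b.
  have [s sS s_max] := @arg_maxnP _ w (mem S) (fun j => g (pi j)) wS.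
  rewrite -(cards1 s); apply: eq_card => s'; rewrite !inE pi_b /=.
  apply/andP/eqP => [[s'S /forallP s'_max]|->]; last first.
    by split=> //; apply/forallP => j; apply/implyP => /s_max.
  apply: (@perm_inj _ pi); apply: val_inj; apply: g_inj; rewrite ?inE ?ltn_ord //.
  have le_s's : g (pi s') <= g (pi s) := s_max s' s'S.
  by apply/eqP; rewrite eqn_leq le_s's; have /implyP -> := s'_max s.
- by move=> s _; apply/subsetP => pi; rewrite !inE => /andP[].
- move=> s s' sS s'S; rewrite -(card_imset (F s) (mulgI (tperm s s'))).
  apply: subset_leq_card; apply/subsetP => _ /imsetP [pi + ->].
  rewrite !inE => /andP [pi_b /forallP s_max]; rewrite permM tpermD ?pi_b; first last.
  + by apply: contraNneq qS => <-.
  + by apply: contraNneq qS => <-.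
  apply/forallP => j; apply/implyP => jS; rewrite !permM tpermR.
  by have /implyP -> := s_max (tperm s s' j); last by case: tpermP.
Qed.

Lemma card_anchor_argmax_inv n (P : pred {perm 'I_n.+1}) (q b w : 'I_n.+1)
    (S : {set 'I_n.+1}) (g : nat -> nat) :
  w \in S -> b \notin S -> {in gtn n.+1 &, injective g} ->
  (forall pi : {perm 'I_n.+1}, pi q = b ->
     P pi = [forall v in S, g ((pi^-1)%g v) <= g ((pi^-1)%g w)]) ->
  #|[set pi | P pi && (pi q == b)]| * #|S| = n`!.
Proof.
move=> wS bS g_inj HP.
rewrite -(@card_anchor_argmax n (fun pi => P (pi^-1)%g) b q w S g) //; last first.
  by move=> pi pi_b; rewrite HP ?invgK // -pi_b permK.
congr (_ * _); rewrite -(card_preimset _ (@invg_inj _)); apply: eq_card => pi.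
rewrite !inE; congr (_ && _); apply/eqP/eqP => [<-|<-]; by rewrite ?permK ?permKV.
Qed.

Lemma card_split_image n (P : pred {perm 'I_n}) (q : 'I_n) :
  #|[set pi | P pi]| = \sum_(c < n) #|[set pi | P pi && (pi q == c)]|.
Proof.
rewrite -sum1_card (partition_big (fun pi : {perm 'I_n} => pi q) predT) //=.
by apply: eq_bigr => c _; rewrite -sum1_card; apply: eq_bigl => pi; rewrite !inE.
Qed.

Lemma card_split_preimage n (P : pred {perm 'I_n}) (b : 'I_n) :
  #|[set pi | P pi]| = \sum_(c < n) #|[set pi | P pi && (pi c == b)]|.
Proof.
rewrite -sum1_card (partition_big (fun pi : {perm 'I_n} => (pi^-1)%g b) predT) //=.
apply: eq_bigr => c _; rewrite -sum1_card; apply: eq_bigl => pi; rewrite !inE.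
by congr (_ && _); apply/eqP/eqP => [<-|<-]; rewrite ?permKV ?permK.
Qed.

Lemma card_ord_lt m k : k <= m -> #|[set j : 'I_m | j < k]| = k.
Proof.
move=> le_km; have widen_inj : injective (widen_ord le_km).
  by move=> i i' /(congr1 val) => /= /val_inj.
rewrite -[RHS]card_ord -(card_imset _ widen_inj).
apply: eq_card => j; rewrite inE; apply/idP/imsetP => [lt_jk|[i _ ->]]; last exact: (ltn_ord i).
by exists (Ordinal lt_jk) => //; apply: val_inj.
Qed.

Lemma card_ord_gt n (a : 'I_n.+1) : #|[set v : 'I_n.+1 | a < v]| = n - a.
Proof.
have -> : [set v : 'I_n.+1 | a < v] = ~: [set v : 'I_n.+1 | v < a.+1].
  by apply/setP => v; rewrite !inE ltnS -ltnNge.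
by rewrite cardsCs setCK card_ord card_ord_lt ?subSS.
Qed.

(** * Harmonic sums *)

Lemma iota_succ m n : iota m.+1 n = map S (iota m n).
Proof. by elim: n m => //= n IHn m; rewrite IHn. Qed.

Lemma iota_rcons m n : iota m n.+1 = rcons (iota m n) (m + n).
Proof. by have := iotaD m n 1; rewrite addn1 cats1. Qed.

Lemma rev_iota1 n : rev (iota 1 n) = map (subn n) (iota 0 n).
Proof.
elim: n => [//|n IHn].
rewrite iota_rcons rev_rcons IHn /= iota_succ -map_comp.
by congr (_ :: _); apply: eq_map => c /=; rewrite subSS.
Qed.

(* The size of the set on which the anchored occurrences force an extremum:
   the values above [c] for the first-value anchor, the candidate positions
   around the position [q] of the maximum otherwise; [1] for the extreme
   anchor, where the pattern cannot occur at all. *)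
Definition first_value_weight n c := if c == n then 1 else n - c.
Definition max_after_weight n q := if q == 0 then 1 else n.+1 - q.
Definition max_before_weight n q := if q == n then 1 else q.+1.

Lemma perm_first_value_weight n :
  perm_eq (map (first_value_weight n) (iota 0 n.+1)) (1 :: iota 1 n).
Proof.
rewrite /first_value_weight iota_rcons map_rcons add0n eqxx perm_rcons perm_cons.
have -> : [seq if c == n then 1 else n - c | c <- iota 0 n] = rev (iota 1 n).
  by rewrite rev_iota1; apply/eq_in_map => c; rewrite mem_iota add0n => /ltn_eqF ->.
by rewrite perm_rev.
Qed.

Lemma perm_max_after_weight n :
  perm_eq (map (max_after_weight n) (iota 0 n.+1)) (1 :: iota 1 n).
Proof.
rewrite /max_after_weight /= perm_cons.
have -> : [seq if c == 0 then 1 else n.+1 - c | c <- iota 1 n] = rev (iota 1 n).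
  by rewrite rev_iota1 iota_succ -map_comp; apply/eq_map => c /=; rewrite subSS.
by rewrite perm_rev.
Qed.

Lemma perm_max_before_weight n :
  perm_eq (map (max_before_weight n) (iota 0 n.+1)) (1 :: iota 1 n).
Proof.
rewrite /max_before_weight iota_rcons map_rcons add0n eqxx perm_rcons perm_cons.
suff -> : [seq if c == n then 1 else c.+1 | c <- iota 0 n] = iota 1 n by [].
by rewrite iota_succ; apply/eq_in_map => c; rewrite mem_iota add0n => /ltn_eqF ->.
Qed.

Section HarmonicCount.
Import Num.Theory.
Local Open Scope ring_scope.

Definition fact_harmonic (n : nat) : rat :=
  (n`!)%:R * (1 + \sum_(1 <= j < n.+1) (j%:R)^-1).

Lemma sum_weighted (k N : nat) (pc : 'I_k -> nat) (m : nat -> nat) :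
  (0 < N)%N -> (forall c : 'I_k, pc c * m c = N)%N ->
  ((\sum_(c < k) pc c)%N%:R : rat) = N%:R * \sum_(x <- map m (iota 0 k)) (x%:R)^-1.
Proof.
move=> N_gt0 pc_m; have -> : iota 0 k = index_iota 0 k by rewrite /index_iota subn0.
rewrite big_map big_mkord natr_sum mulr_sumr; apply: eq_bigr => c _.
have m_neq0 : (m c)%:R != 0 :> rat.
  by rewrite pnatr_eq0; apply: contraTneq N_gt0 => m0; rewrite -(pc_m c) m0 muln0.
by rewrite -(pc_m c) natrM mulfK.
Qed.

Lemma sum_weighted_fact_harmonic n (pc : 'I_n.+1 -> nat) (m : nat -> nat) :
  (forall c : 'I_n.+1, pc c * m c = n`!)%N ->
  perm_eq (map m (iota 0 n.+1)) (1 :: iota 1 n) ->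
  ((\sum_(c < n.+1) pc c)%N%:R : rat) = fact_harmonic n.
Proof.
move=> pc_m m_perm; rewrite (sum_weighted (fact_gt0 n) pc_m) (perm_big _ m_perm).
by rewrite big_cons invr1 /fact_harmonic /index_iota subSS subn0.
Qed.

Lemma avoiders_count_by_first_value k (p : bvpat k) n :
  (forall c : 'I_n.+1,
     #|[set pi | ~~ contains pi p && (pi ord0 == c)]| * first_value_weight n c = n`!)%N ->
  (avoiders_count p n.+1)%:R = fact_harmonic n.
Proof.
move=> count_c; rewrite /avoiders_count (card_split_image _ ord0).
exact: sum_weighted_fact_harmonic count_c (perm_first_value_weight n).
Qed.

Lemma avoiders_count_by_max_position k (p : bvpat k) n (m : nat -> nat) :
  perm_eq (map m (iota 0 n.+1)) (1 :: iota 1 n) ->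
  (forall q : 'I_n.+1,
     #|[set pi | ~~ contains pi p && (pi q == ord_max)]| * m q = n`!)%N ->
  (avoiders_count p n.+1)%:R = fact_harmonic n.
Proof.
move=> m_perm count_q; rewrite /avoiders_count (card_split_preimage _ ord_max).
exact: sum_weighted_fact_harmonic count_q m_perm.
Qed.

End HarmonicCount.

(** * The seven base patterns *)

Definition p123_X0_Y1 : bvpat 3 := (perm123, s3 0, s3 1).
Definition p123_X0_Y3 : bvpat 3 := (perm123, s3 0, s3 3).
Definition p132_X0_Y1 : bvpat 3 := (perm132, s3 0, s3 1).
Definition p132_X0_Y3 : bvpat 3 := (perm132, s3 0, s3 3).
Definition p132_X1_Y3 : bvpat 3 := (perm132, s3 1, s3 3).
Definition p132_X2_Y3 : bvpat 3 := (perm132, s3 2, s3 3).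
Definition p132_X3_Y3 : bvpat 3 := (perm132, s3 3, s3 3).

Lemma perm132E : perm132 = tperm o1 o2.
Proof. by congr tperm; apply: val_inj; rewrite /= inordK. Qed.

Lemma forall_in_set1 (T : finType) (a : T) (P : pred T) : [forall x in [set a], P x] = P a.
Proof.
apply/forallP/idP => [/(_ a)|Pa x]; first by rewrite inE eqxx.
by rewrite inE; apply/implyP => /eqP ->.
Qed.

Ltac occurrence3_simpl :=
  rewrite occurrence3E increasing3_triple /bv_sigma /bv_X /bv_Y /= ?perm132E
    ?order_iso3_perm1 ?order_iso3_tperm12 /s3 !forall_in_set1 /positions3 /values3 !inordK //=
    ?tpermV ?invg1 ?perm1 ?tpermL ?tpermR ?tpermD // ?ffunE.

Section PatternOccurrences.
Variables (n : nat) (pi : {perm 'I_n}) (i0 i1 i2 : 'I_n).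

Lemma occurrence_p123_X0_Y1 : occurrence pi p123_X0_Y1 (triple i0 i1 i2) =
  [&& i0 < i1 < i2, pi i0 < pi i1 < pi i2, (i0 : nat) == 0 & (pi i1 : nat) == (pi i0).+1].
Proof. by occurrence3_simpl. Qed.

Lemma occurrence_p123_X0_Y3 : occurrence pi p123_X0_Y3 (triple i0 i1 i2) =
  [&& i0 < i1 < i2, pi i0 < pi i1 < pi i2, (i0 : nat) == 0 & n == (pi i2).+1].
Proof. by occurrence3_simpl. Qed.

Lemma occurrence_p132_X0_Y1 : occurrence pi p132_X0_Y1 (triple i0 i1 i2) =
  [&& i0 < i1 < i2, pi i0 < pi i2 < pi i1, (i0 : nat) == 0 & (pi i2 : nat) == (pi i0).+1].
Proof. by occurrence3_simpl. Qed.

Lemma occurrence_p132_X0_Y3 : occurrence pi p132_X0_Y3 (triple i0 i1 i2) =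
  [&& i0 < i1 < i2, pi i0 < pi i2 < pi i1, (i0 : nat) == 0 & n == (pi i1).+1].
Proof. by occurrence3_simpl. Qed.

Lemma occurrence_p132_X1_Y3 : occurrence pi p132_X1_Y3 (triple i0 i1 i2) =
  [&& i0 < i1 < i2, pi i0 < pi i2 < pi i1, (i1 : nat) == i0.+1 & n == (pi i1).+1].
Proof. by occurrence3_simpl. Qed.

Lemma occurrence_p132_X2_Y3 : occurrence pi p132_X2_Y3 (triple i0 i1 i2) =
  [&& i0 < i1 < i2, pi i0 < pi i2 < pi i1, (i2 : nat) == i1.+1 & n == (pi i1).+1].
Proof. by occurrence3_simpl. Qed.

Lemma occurrence_p132_X3_Y3 : occurrence pi p132_X3_Y3 (triple i0 i1 i2) =
  [&& i0 < i1 < i2, pi i0 < pi i2 < pi i1, n == i2.+1 & n == (pi i1).+1].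
Proof. by occurrence3_simpl. Qed.

End PatternOccurrences.

Lemma ord_max_or_ltn n (c : 'I_n.+1) : c = ord_max \/ c < n.
Proof.
have := ltn_ord c; rewrite ltnS leq_eqVlt => /orP [/eqP c_n|]; [left; exact: val_inj|by right].
Qed.

Lemma ord_gt_ord_max n (v : 'I_n.+1) : ((ord_max : 'I_n.+1) < v) = false.
Proof. by rewrite ltnNge -ltnS ltn_ord. Qed.

Lemma permV_gt0 n (pi : {perm 'I_n.+1}) (v : 'I_n.+1) : (v : nat) != pi ord0 -> 0 < (pi^-1)%g v.
Proof.
move=> v_ne; rewrite lt0n; apply: contra v_ne => /eqP v0.
by rewrite -[v in val v](permKV pi) (_ : (pi^-1)%g v = ord0) //; apply: val_inj.
Qed.

Lemma perm_lt_max n (pi : {perm 'I_n.+1}) (q j : 'I_n.+1) :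
  pi q = ord_max -> j != q -> pi j < n.
Proof.
move=> pi_q; apply: contraNT; rewrite -leqNgt => n_le.
suff pi_j : pi j = pi q by rewrite (perm_inj pi_j).
by apply: val_inj; rewrite pi_q /=; apply/anti_leq; rewrite n_le -ltnS ltn_ord.
Qed.

Lemma perm_eq_max n (pi : {perm 'I_n.+1}) (q i : 'I_n.+1) :
  pi q = ord_max -> n.+1 = (pi i).+1 -> i = q.
Proof. by move=> pi_q [pi_i]; apply: (@perm_inj _ pi); apply: val_inj; rewrite pi_q. Qed.

Lemma avoid_p123_X0_Y1E n (pi : {perm 'I_n.+1}) (a w : 'I_n.+1) :
  pi ord0 = a -> w = a.+1 :> nat ->
  ~~ contains pi p123_X0_Y1 =
    [forall v in [set v : 'I_n.+1 | a < v], ((pi^-1)%g v : nat) <= (pi^-1)%g w].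
Proof.
move=> pi0 w_a; apply/negP/forallP => [avoid v|w_last /contains3P [i0 [i1 [i2]]]].
  rewrite inE; apply/implyP => a_v; rewrite leqNgt; apply/negP => w_before_v; apply: avoid.
  have v_w : (v : nat) != w by apply: contraTneq w_before_v => /val_inj ->; rewrite ltnn.
  have w_pos : 0 < (pi^-1)%g w by apply: permV_gt0; rewrite pi0 w_a; lia.
  apply/contains3P; exists ord0, (pi^-1 w)%g, (pi^-1 v)%g.
  by rewrite occurrence_p123_X0_Y1 !permKV pi0 w_a /= eqxx andbT; lia.
rewrite occurrence_p123_X0_Y1 => /and4P [/andP [_ lt12] /andP [_ lt_v12] /eqP i00 /eqP pi1].
have i0E : i0 = ord0 by apply: val_inj.
have pi1w : pi i1 = w by apply: val_inj; rewrite /= pi1 w_a i0E pi0.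
have a_v2 : a < pi i2 by rewrite -pi0 -i0E; lia.
by have := w_last (pi i2); rewrite inE a_v2 -pi1w !permK leqNgt lt12.
Qed.

Lemma avoid_p123_X0_Y3E n (pi : {perm 'I_n.+1}) (a : 'I_n.+1) :
  pi ord0 = a ->
  ~~ contains pi p123_X0_Y3 =
    [forall v in [set v : 'I_n.+1 | a < v],
       n - (pi^-1)%g v <= n - (pi^-1)%g (ord_max : 'I_n.+1)].
Proof.
move=> pi0; apply/negP/forallP => [avoid v|max_first /contains3P [i0 [i1 [i2]]]].
  rewrite inE; apply/implyP => a_v; rewrite leqNgt; apply/negP => v_before_max; apply: avoid.
  have v_n : (v : nat) != n.
    by apply: contraTneq v_before_max => v_n; rewrite (_ : v = ord_max) ?ltnn //; apply: val_inj.
  have v_pos : 0 < (pi^-1)%g v by apply: permV_gt0; rewrite pi0; lia.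
  have lt_v := ltn_ord v; have lt_pv := ltn_ord ((pi^-1)%g v).
  have lt_pmax := ltn_ord ((pi^-1)%g (ord_max : 'I_n.+1)).
  apply/contains3P; exists ord0, (pi^-1 v)%g, (pi^-1 ord_max)%g.
  by rewrite occurrence_p123_X0_Y3 !permKV pi0 /= eqxx andbT; lia.
rewrite occurrence_p123_X0_Y3 => /and4P [/andP [_ lt12] /andP [lt_v01 _] /eqP i00 /eqP pi2].
have i0E : i0 = ord0 by apply: val_inj.
have pi2_max : pi i2 = ord_max by apply: val_inj => /=; lia.
have := max_first (pi i1); rewrite inE -pi0 -i0E lt_v01 -pi2_max !permK.
by have := ltn_ord i1; have := ltn_ord i2; lia.
Qed.

Lemma avoid_p132_X0_Y1E n (pi : {perm 'I_n.+1}) (a w : 'I_n.+1) :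
  pi ord0 = a -> w = a.+1 :> nat ->
  ~~ contains pi p132_X0_Y1 =
    [forall v in [set v : 'I_n.+1 | a < v], n - (pi^-1)%g v <= n - (pi^-1)%g w].
Proof.
move=> pi0 w_a; apply/negP/forallP => [avoid v|w_first /contains3P [i0 [i1 [i2]]]].
  rewrite inE; apply/implyP => a_v; rewrite leqNgt; apply/negP => v_before_w; apply: avoid.
  have v_w : (v : nat) != w by apply: contraTneq v_before_w => /val_inj ->; rewrite ltnn.
  have v_pos : 0 < (pi^-1)%g v by apply: permV_gt0; rewrite pi0; lia.
  have := ltn_ord ((pi^-1)%g v); have := ltn_ord ((pi^-1)%g w); have := ltn_ord v.
  move=> lt_vn lt_wpos lt_vpos.
  apply/contains3P; exists ord0, (pi^-1 v)%g, (pi^-1 w)%g.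
  by rewrite occurrence_p132_X0_Y1 !permKV pi0 w_a /= eqxx andbT; lia.
rewrite occurrence_p132_X0_Y1 => /and4P [/andP [_ lt12] /andP [_ lt_v21] /eqP i00 /eqP pi2].
have i0E : i0 = ord0 by apply: val_inj.
have pi2w : pi i2 = w by apply: val_inj; rewrite /= pi2 w_a i0E pi0.
have a_v1 : a < pi i1 by rewrite -pi0 -i0E; lia.
have := w_first (pi i1); rewrite inE a_v1 -pi2w !permK.
by have := ltn_ord i1; have := ltn_ord i2; lia.
Qed.

Lemma avoid_p132_X0_Y3E n (pi : {perm 'I_n.+1}) (a : 'I_n.+1) :
  pi ord0 = a ->
  ~~ contains pi p132_X0_Y3 =
    [forall v in [set v : 'I_n.+1 | a < v],
       ((pi^-1)%g v : nat) <= (pi^-1)%g (ord_max : 'I_n.+1)].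
Proof.
move=> pi0; apply/negP/forallP => [avoid v|max_last /contains3P [i0 [i1 [i2]]]].
  rewrite inE; apply/implyP => a_v; rewrite leqNgt; apply/negP => max_before_v; apply: avoid.
  have v_n : (v : nat) != n.
    by apply: contraTneq max_before_v => v_n; rewrite (_ : v = ord_max) ?ltnn //; apply: val_inj.
  have lt_v := ltn_ord v.
  have max_pos : 0 < (pi^-1)%g (ord_max : 'I_n.+1) by apply: permV_gt0; rewrite pi0 /=; lia.
  apply/contains3P; exists ord0, (pi^-1 ord_max)%g, (pi^-1 v)%g.
  by rewrite occurrence_p132_X0_Y3 !permKV pi0 /= eqxx andbT; lia.
rewrite occurrence_p132_X0_Y3 => /and4P [/andP [_ lt12] /andP [lt_v02 _] /eqP i00 /eqP pi1].
have i0E : i0 = ord0 by apply: val_inj.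
have pi1_max : pi i1 = ord_max by apply: val_inj => /=; lia.
by have := max_last (pi i2); rewrite inE -pi0 -i0E lt_v02 -pi1_max !permK; lia.
Qed.

Lemma avoid_p132_X1_Y3E n (pi : {perm 'I_n.+1}) (q w : 'I_n.+1) :
  pi q = ord_max -> q = w.+1 :> nat ->
  ~~ contains pi p132_X1_Y3 =
    [forall j in [set j : 'I_n.+1 | (j == w) || (q < j)], (pi j : nat) <= pi w].
Proof.
move=> pi_q q_w; apply/negP/forallP => [avoid j|w_max /contains3P [i0 [i1 [i2]]]].
  rewrite inE; apply/implyP => j_in; rewrite leqNgt; apply/negP => lt_wj; apply: avoid.
  have j_w : j != w by apply: contraTneq lt_wj => ->; rewrite ltnn.
  have q_j : q < j by move: j_in; rewrite (negbTE j_w).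
  have lt_jn : pi j < n by apply: perm_lt_max pi_q _; rewrite neq_ltn q_j orbT.
  apply/contains3P; exists w, q, j.
  by rewrite occurrence_p132_X1_Y3 pi_q q_w /=; lia.
rewrite occurrence_p132_X1_Y3 => /and4P [/andP [_ lt12] /andP [lt_v02 _] /eqP i1_i0 /eqP pi1].
have i1q := perm_eq_max pi_q pi1; subst i1.
have i0w : i0 = w by apply: val_inj => /=; lia.
by have := w_max i2; rewrite inE lt12 orbT -i0w; lia.
Qed.

Lemma avoid_p132_X2_Y3E n (pi : {perm 'I_n.+1}) (q w : 'I_n.+1) :
  pi q = ord_max -> w = q.+1 :> nat ->
  ~~ contains pi p132_X2_Y3 =
    [forall j in [set j : 'I_n.+1 | (j < q) || (j == w)], n - pi j <= n - pi w].
Proof.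
move=> pi_q w_q; apply/negP/forallP => [avoid j|w_min /contains3P [i0 [i1 [i2]]]].
  rewrite inE; apply/implyP => j_in; rewrite leqNgt; apply/negP => lt_jw; apply: avoid.
  have j_w : j != w by apply: contraTneq lt_jw => ->; rewrite ltnn.
  have j_q : j < q by move: j_in; rewrite (negbTE j_w) orbF.
  have lt_wn : pi w < n by apply: perm_lt_max pi_q _; rewrite -val_eqE /= w_q; lia.
  have lt_pj := ltn_ord (pi j); have lt_pw := ltn_ord (pi w).
  apply/contains3P; exists j, q, w.
  by rewrite occurrence_p132_X2_Y3 pi_q w_q /=; lia.
rewrite occurrence_p132_X2_Y3 => /and4P [/andP [lt01 _] /andP [lt_v02 _] /eqP i2_i1 /eqP pi1].
have i1q := perm_eq_max pi_q pi1; subst i1.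
have i2w : i2 = w by apply: val_inj => /=; lia.
have := ltn_ord (pi i0); have := ltn_ord (pi w).
by have := w_min i0; rewrite inE lt01 -i2w; lia.
Qed.

Lemma avoid_p132_X3_Y3E n (pi : {perm 'I_n.+1}) (q : 'I_n.+1) :
  pi q = ord_max -> q < n ->
  ~~ contains pi p132_X3_Y3 =
    [forall j in [set j : 'I_n.+1 | (j < q) || (j == ord_max)],
       n - pi j <= n - pi (ord_max : 'I_n.+1)].
Proof.
move=> pi_q lt_qn; set w : 'I_n.+1 := ord_max.
apply/negP/forallP => [avoid j|w_min /contains3P [i0 [i1 [i2]]]].
  rewrite inE; apply/implyP => j_in; rewrite leqNgt; apply/negP => lt_jw; apply: avoid.
  have j_w : j != w by apply: contraTneq lt_jw => ->; rewrite ltnn.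
  have j_q : j < q by move: j_in; rewrite (negbTE j_w) orbF.
  have lt_wn : pi w < n by apply: perm_lt_max pi_q _; rewrite -val_eqE /=; lia.
  have lt_pj := ltn_ord (pi j); have lt_pw := ltn_ord (pi w).
  apply/contains3P; exists j, q, w.
  by rewrite occurrence_p132_X3_Y3 pi_q /= eqxx andbT; lia.
rewrite occurrence_p132_X3_Y3 => /and4P [/andP [lt01 _] /andP [lt_v02 _] /eqP i2_n /eqP pi1].
have i1q := perm_eq_max pi_q pi1; subst i1.
have i2w : i2 = w by apply: val_inj => /=; lia.
have := ltn_ord (pi i0); have := ltn_ord (pi w).
by have := w_min i0; rewrite inE lt01 -i2w; lia.
Qed.

Lemma avoid_p123_X0_Y1_first_max n (pi : {perm 'I_n.+1}) :
  pi ord0 = ord_max -> ~~ contains pi p123_X0_Y1.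
Proof.
move=> pi0; apply/contains3P => [[i0 [i1 [i2]]]].
rewrite occurrence_p123_X0_Y1 => /and4P [_ /andP [lt01 _] /eqP i00 _].
by move: lt01; rewrite (_ : i0 = ord0) ?pi0 ?ord_gt_ord_max //; apply: val_inj.
Qed.

Lemma avoid_p132_X0_Y1_first_max n (pi : {perm 'I_n.+1}) :
  pi ord0 = ord_max -> ~~ contains pi p132_X0_Y1.
Proof.
move=> pi0; apply/contains3P => [[i0 [i1 [i2]]]].
rewrite occurrence_p132_X0_Y1 => /and4P [_ /andP [lt02 _] /eqP i00 _].
by move: lt02; rewrite (_ : i0 = ord0) ?pi0 ?ord_gt_ord_max //; apply: val_inj.
Qed.

Lemma avoid_p132_X1_Y3_max_first n (pi : {perm 'I_n.+1}) :
  pi ord0 = ord_max -> ~~ contains pi p132_X1_Y3.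
Proof.
move=> pi0; apply/contains3P => [[i0 [i1 [i2]]]].
rewrite occurrence_p132_X1_Y3 => /and4P [/andP [lt01 _] _ _ /eqP pi1].
by move: lt01; rewrite (perm_eq_max pi0 pi1).
Qed.

Lemma avoid_p132_X2_Y3_max_last n (pi : {perm 'I_n.+1}) :
  pi ord_max = ord_max -> ~~ contains pi p132_X2_Y3.
Proof.
move=> pin; apply/contains3P => [[i0 [i1 [i2]]]].
rewrite occurrence_p132_X2_Y3 => /and4P [/andP [_ lt12] _ _ /eqP pi1].
by move: lt12; rewrite (perm_eq_max pin pi1) ord_gt_ord_max.
Qed.

Lemma avoid_p132_X3_Y3_max_last n (pi : {perm 'I_n.+1}) :
  pi ord_max = ord_max -> ~~ contains pi p132_X3_Y3.
Proof.
move=> pin; apply/contains3P => [[i0 [i1 [i2]]]].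
rewrite occurrence_p132_X3_Y3 => /and4P [/andP [_ lt12] _ _ /eqP pi1].
by move: lt12; rewrite (perm_eq_max pin pi1) ord_gt_ord_max.
Qed.

Lemma first_value_count_p123_X0_Y1 n (c : 'I_n.+1) :
  #|[set pi | ~~ contains pi p123_X0_Y1 && (pi ord0 == c)]| * first_value_weight n c = n`!.
Proof.
rewrite /first_value_weight; case: (ord_max_or_ltn c) => [->|c_lt].
  by rewrite eqxx muln1; apply: card_anchor_all; exact: avoid_p123_X0_Y1_first_max.
rewrite ltn_eqF // -(card_ord_gt c).
have w_val : (inord c.+1 : 'I_n.+1) = c.+1 :> nat by rewrite inordK.
apply: (card_anchor_argmax_inv (w := inord c.+1) (g := id)); rewrite ?inE ?w_val ?ltnn //.
by move=> pi pi0; apply: avoid_p123_X0_Y1E.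
Qed.

Lemma first_value_count_p123_X0_Y3 n (c : 'I_n.+1) :
  #|[set pi | ~~ contains pi p123_X0_Y3 && (pi ord0 == c)]| * first_value_weight n c = n`!.
Proof.
rewrite /first_value_weight; case: (ord_max_or_ltn c) => [->|c_lt].
  rewrite eqxx muln1; apply: card_anchor_all => pi pi0.
  by rewrite (avoid_p123_X0_Y3E pi0); apply/forallP => v; rewrite inE ord_gt_ord_max.
rewrite ltn_eqF // -(card_ord_gt c).
apply: (card_anchor_argmax_inv (w := ord_max) (g := subn n)); rewrite ?inE ?ltnn //.
  by move=> x y; rewrite !inE /= => ? ?; lia.
by move=> pi pi0; apply: avoid_p123_X0_Y3E.
Qed.

Lemma first_value_count_p132_X0_Y1 n (c : 'I_n.+1) :
  #|[set pi | ~~ contains pi p132_X0_Y1 && (pi ord0 == c)]| * first_value_weight n c = n`!.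
Proof.
rewrite /first_value_weight; case: (ord_max_or_ltn c) => [->|c_lt].
  by rewrite eqxx muln1; apply: card_anchor_all; exact: avoid_p132_X0_Y1_first_max.
rewrite ltn_eqF // -(card_ord_gt c).
have w_val : (inord c.+1 : 'I_n.+1) = c.+1 :> nat by rewrite inordK.
apply: (card_anchor_argmax_inv (w := inord c.+1) (g := subn n)); rewrite ?inE ?w_val ?ltnn //.
  by move=> x y; rewrite !inE /= => ? ?; lia.
by move=> pi pi0; apply: avoid_p132_X0_Y1E.
Qed.

Lemma first_value_count_p132_X0_Y3 n (c : 'I_n.+1) :
  #|[set pi | ~~ contains pi p132_X0_Y3 && (pi ord0 == c)]| * first_value_weight n c = n`!.
Proof.
rewrite /first_value_weight; case: (ord_max_or_ltn c) => [->|c_lt].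
  rewrite eqxx muln1; apply: card_anchor_all => pi pi0.
  by rewrite (avoid_p132_X0_Y3E pi0); apply/forallP => v; rewrite inE ord_gt_ord_max.
rewrite ltn_eqF // -(card_ord_gt c).
apply: (card_anchor_argmax_inv (w := ord_max) (g := id)); rewrite ?inE ?ltnn //.
by move=> pi pi0; apply: avoid_p132_X0_Y3E.
Qed.

Lemma max_position_count_p132_X1_Y3 n (q : 'I_n.+1) :
  #|[set pi | ~~ contains pi p132_X1_Y3 && (pi q == ord_max)]|
    * max_after_weight n q = n`!.
Proof.
rewrite /max_after_weight.
have [q0|q_gt0] := posnP q.
  rewrite muln1 (_ : q = ord0); last exact: val_inj.
  by apply: card_anchor_all; exact: avoid_p132_X1_Y3_max_first.
pose w : 'I_n.+1 := inord q.-1.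
have q_w : q = w.+1 :> nat by rewrite inordK; have := ltn_ord q; lia.
have -> : n.+1 - q = #|w |: [set j : 'I_n.+1 | q < j]|.
  by rewrite cardsU1 card_ord_gt inE q_w ltnNge leqnSn /=; move: (ltn_ord q); rewrite q_w; lia.
have -> : w |: [set j : 'I_n.+1 | q < j] = [set j | (j == w) || (q < j)].
  by apply/setP => j; rewrite !inE.
apply: (card_anchor_argmax (w := w) (g := id)); rewrite ?inE ?eqxx //.
  by rewrite ltnn orbF -val_eqE /= q_w; lia.
by move=> pi pi_q; apply: avoid_p132_X1_Y3E.
Qed.

Lemma max_position_count_p132_X2_Y3 n (q : 'I_n.+1) :
  #|[set pi | ~~ contains pi p132_X2_Y3 && (pi q == ord_max)]|
    * max_before_weight n q = n`!.
Proof.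
rewrite /max_before_weight.
case: (ord_max_or_ltn q) => [->|q_lt].
  by rewrite eqxx muln1; apply: card_anchor_all; exact: avoid_p132_X2_Y3_max_last.
rewrite ltn_eqF //.
pose w : 'I_n.+1 := inord q.+1.
have w_q : w = q.+1 :> nat by rewrite inordK.
have -> : q.+1 = #|[set j : 'I_n.+1 | (j < q) || (j == w)]|.
  have -> : [set j : 'I_n.+1 | (j < q) || (j == w)] = w |: [set j : 'I_n.+1 | j < q].
    by apply/setP => j; rewrite !inE orbC.
  by rewrite cardsU1 card_ord_lt ?inE ?w_q ?ltnNge ?leqnSn // ltnW.
apply: (card_anchor_argmax (w := w) (g := subn n)); rewrite ?inE ?eqxx ?orbT //.
- by rewrite ltnn /= -val_eqE /= w_q; lia.
- by move=> x y; rewrite !inE /= => ? ?; lia.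
- by move=> pi pi_q; apply: avoid_p132_X2_Y3E.
Qed.

Lemma max_position_count_p132_X3_Y3 n (q : 'I_n.+1) :
  #|[set pi | ~~ contains pi p132_X3_Y3 && (pi q == ord_max)]|
    * max_before_weight n q = n`!.
Proof.
rewrite /max_before_weight.
case: (ord_max_or_ltn q) => [->|q_lt].
  by rewrite eqxx muln1; apply: card_anchor_all; exact: avoid_p132_X3_Y3_max_last.
rewrite ltn_eqF //.
have -> : q.+1 = #|[set j : 'I_n.+1 | (j < q) || (j == ord_max)]|.
  have -> : [set j : 'I_n.+1 | (j < q) || (j == ord_max)] = ord_max |: [set j : 'I_n.+1 | j < q].
    by apply/setP => j; rewrite !inE orbC.
  by rewrite cardsU1 card_ord_lt ?inE /= 1?ltnNge ?(ltnW q_lt) //= ltnW.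
apply: (card_anchor_argmax (w := ord_max) (g := subn n)); rewrite ?inE ?eqxx ?orbT //.
- by rewrite ltnn /= -val_eqE /=; lia.
- by move=> x y; rewrite !inE /= => ? ?; lia.
- by move=> pi pi_q; apply: avoid_p132_X3_Y3E.
Qed.

Local Open Scope ring_scope.

Theorem mainTheorem10 (p0 p : bvpat 3) (n : nat) :
  p0 \in base_patterns -> in_sym_class p0 p -> (1 <= n)%N ->
  ((avoiders_count p n)%:R : rat) =
    ((n.-1)`!)%:R * (1 + \sum_(1 <= j < n) (j%:R)^-1).
Proof.
move=> p0_base p0_p; case: n => [//|n] _.
rewrite (avoiders_count_class n.+1 p0_p) -/(fact_harmonic n).
move: p0_base; rewrite !inE.
case/orP => [/eqP ->|].
  exact: avoiders_count_by_first_value (@first_value_count_p123_X0_Y1 n).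
case/orP => [/eqP ->|].
  exact: avoiders_count_by_first_value (@first_value_count_p123_X0_Y3 n).
case/orP => [/eqP ->|].
  exact: avoiders_count_by_first_value (@first_value_count_p132_X0_Y1 n).
case/orP => [/eqP ->|].
  exact: avoiders_count_by_first_value (@first_value_count_p132_X0_Y3 n).
case/orP => [/eqP ->|].
  exact: avoiders_count_by_max_position (perm_max_after_weight n)
    (@max_position_count_p132_X1_Y3 n).
case/orP => [/eqP ->|].
  exact: avoiders_count_by_max_position (perm_max_before_weight n)
    (@max_position_count_p132_X2_Y3 n).
move/eqP => ->.
exact: avoiders_count_by_max_position (perm_max_before_weight n)
  (@max_position_count_p132_X3_Y3 n).
Qed.
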